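(* On the product manifold $\mathbb{R}\times\Sigma^2$ with metric $ds^2+d\rho^2+\tanh^2\rho\,d\theta^2$ ($s\in\mathbb{R}$, $(\rho,\theta)$ polar coordinates on $\Sigma^2$), the set of smooth functions $F$ with $\nabla\nabla F=\mathrm{Ric}$ and of at most linear growth ($|F(x)|\le C(1+d(x_0,x))$ for some $C$ and base point $x_0$) is exactly $$\{\,c_1+c_2s+2\ln\cosh\rho\;:\;c_1,c_2\in\mathbb{R}\,\}.$$
   Context: Hamilton's cigar $\Sigma^2$ is $\mathbb{R}^2$ with the metric $(dx^2+dy^2)/(1+x^2+y^2)$; in polar coordinates $(r,\theta)$ and with $\rho=\sinh^{-1}r$ this metric is $d\rho^2+\tanh^2\rho\,d\theta^2$, and $2\ln\cosh\rho$ is a Ricci potential of the cigar (its Hessian equals its Ricci tensor). A Ricci potential on a Riemannian manifold is a smooth function whose Hessian equals the Ricci tensor. *)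

From Stdlib Require Import Reals List.
From Coquelicot Require Import Coquelicot.
Open Scope R_scope.

(** The manifold R x Sigma^2 is R^3 with global coordinates p = (s, x, y):
    s in R, and (x, y) the Cartesian coordinates of the cigar
    Sigma^2 = (R^2, (dx^2+dy^2)/(1+x^2+y^2)). *)
Definition pt : Type := (R * R * R)%type.

Definition coord (i : nat) (p : pt) : R :=
  match i with
  | 0%nat => fst (fst p)
  | 1%nat => snd (fst p)
  | _ => snd p
  end.

Definition shift (i : nat) (h : R) (p : pt) : pt :=
  match i with
  | 0%nat => (fst (fst p) + h, snd (fst p), snd p)
  | 1%nat => (fst (fst p), snd (fst p) + h, snd p)
  | _ => (fst (fst p), snd (fst p), snd p + h)
  end.

Definition partial (i : nat) (F : pt -> R) : pt -> R :=
  fun p => Derive (fun h => F (shift i h p)) 0.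

Definition has_partial (i : nat) (F : pt -> R) : Prop :=
  forall p, ex_derive (fun h => F (shift i h p)) 0.

Definition iter_partial (l : list nat) (F : pt -> R) : pt -> R :=
  fold_right partial F l.

Definition smooth (F : pt -> R) : Prop :=
  forall l : list nat, (forall i, In i l -> (i < 3)%nat) ->
    (forall i, (i < 3)%nat -> has_partial i (iter_partial l F)) /\
    (forall p, continuous (iter_partial l F) p).

Definition sum3 (f : nat -> R) : R := f 0%nat + f 1%nat + f 2%nat.

Definition conf (p : pt) : R := / (1 + coord 1 p ^ 2 + coord 2 p ^ 2).

Definition g (p : pt) (i j : nat) : R :=
  if Nat.eqb i j then (match i with 0%nat => 1 | _ => conf p end) else 0.

Definition ginv (p : pt) (i j : nat) : R :=
  if Nat.eqb i j then (match i with 0%nat => 1 | _ => / conf p end) else 0.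

Definition Gamma (p : pt) (k i j : nat) : R :=
  / 2 * sum3 (fun l => ginv p k l *
     (partial i (fun q => g q j l) p + partial j (fun q => g q i l) p
      - partial l (fun q => g q i j) p)).

Definition Ric (p : pt) (i j : nat) : R :=
  sum3 (fun k => partial k (fun q => Gamma q k i j) p)
  - sum3 (fun k => partial j (fun q => Gamma q k i k) p)
  + sum3 (fun k => sum3 (fun l => Gamma p k k l * Gamma p l i j))
  - sum3 (fun k => sum3 (fun l => Gamma p k j l * Gamma p l i k)).

Definition Hess (F : pt -> R) (p : pt) (i j : nat) : R :=
  partial i (partial j F) p - sum3 (fun k => Gamma p k i j * partial k F p).

Definition C1_curve (gam : R -> pt) : Prop :=
  forall i, (i < 3)%nat ->
    (forall t, ex_derive (fun u => coord i (gam u)) t) /\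
    (forall t, 0 <= t <= 1 -> continuous (Derive (fun u => coord i (gam u))) t).

Definition curve_length (gam : R -> pt) : R :=
  RInt (fun t => sqrt (sum3 (fun i => sum3 (fun j =>
          g (gam t) i j * Derive (fun u => coord i (gam u)) t
                        * Derive (fun u => coord j (gam u)) t)))) 0 1.

Definition dist (p q : pt) : R :=
  real (Glb_Rbar (fun L => exists gam : R -> pt,
          C1_curve gam /\ gam 0 = p /\ gam 1 = q /\ L = curve_length gam)).

Definition linear_growth (F : pt -> R) : Prop :=
  exists (x0 : pt) (C : R), forall x, Rabs (F x) <= C * (1 + dist x0 x).

(* polar radius rho = arcsinh r on the cigar, r = sqrt(x^2+y^2) *)
Definition rho (p : pt) : R := arcsinh (sqrt (coord 1 p ^ 2 + coord 2 p ^ 2)).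

(* Subtracting the potential [ln (1 + r^2) = 2 ln cosh rho], whose Hessian is the Ricci
   tensor, reduces the theorem to functions E with vanishing Hessian, i.e. with parallel
   gradient.  The cigar component (P, Q) of that gradient solves a first-order system whose
   integrability condition (symmetry of mixed partials) is multiplication by the Gauss
   curvature 2 / (1 + r^2) of the cigar, which never vanishes; so P = Q = 0, the s-component
   is constant and E = c1 + c2 s.  In particular the growth condition is automatic.
   Conversely, along any curve |ds| and |d ln (1 + r^2)| / 2 are bounded by the speed, so
   |s| and ln (1 + r^2) / 2 are bounded by the distance to the origin. *)

From Stdlib Require Import Reals Lra Lia List FunctionalExtensionality.
From Coquelicot Require Import Coquelicot.
Open Scope R_scope.

Definition one_plus_r2 (p : pt) : R := 1 + coord 1 p ^ 2 + coord 2 p ^ 2.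

Definition origin : pt := (0, 0, 0).

Lemma one_plus_r2_pos p : 0 < one_plus_r2 p.
Proof. unfold one_plus_r2; nra. Qed.

Lemma continuous_Rplus {U : UniformSpace} (f g : U -> R) x :
  continuous f x -> continuous g x -> continuous (fun y => f y + g y) x.
Proof. exact (continuous_plus f g x). Qed.

Lemma continuous_Rmult {U : UniformSpace} (f g : U -> R) x :
  continuous f x -> continuous g x -> continuous (fun y => f y * g y) x.
Proof. exact (continuous_mult f g x). Qed.

Ltac continuous_arith :=
  cbn [pow];
  repeat match goal with
  | |- continuous (fun y => @?f y + @?h y) _ => apply (continuous_Rplus f h)
  | |- continuous (fun y => @?f y * @?h y) _ => apply (continuous_Rmult f h)
  | |- continuous (fun _ => ?c) _ => apply continuous_const
  end.

Lemma continuous_coord i p : continuous (coord i) p.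
Proof.
  destruct i as [|[|i]]; simpl.
  - apply (continuous_comp fst fst), continuous_fst; apply continuous_fst.
  - apply (continuous_comp fst snd); [apply continuous_fst | apply continuous_snd].
  - apply continuous_snd.
Qed.

Lemma continuous_one_plus_r2 p : continuous one_plus_r2 p.
Proof. unfold one_plus_r2; continuous_arith; apply continuous_coord. Qed.

(* Closed-form functions on R^3 built from the coordinates, [conf] and [ln (1 + r^2)];
   this class is closed under [partial], which makes every computation below symbolic. *)
Inductive fexpr : Type :=
| FConst (c : R) | FCoord (k : nat) | FPlus (a b : fexpr) | FMult (a b : fexpr)
| FConf | FLnOnePlusR2.

Fixpoint eval (e : fexpr) (p : pt) : R :=
  match e with
  | FConst c => c
  | FCoord k => coord k p
  | FPlus a b => eval a p + eval b p
  | FMult a b => eval a p * eval b p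
  | FConf => conf p
  | FLnOnePlusR2 => ln (one_plus_r2 p)
  end.

(* [coord k] for [k >= 2] and [shift i] for [i >= 2] all refer to the last coordinate. *)
Definition dcoord (k i : nat) : R :=
  match k, i with
  | O, O | 1%nat, 1%nat | S (S _), S (S _) => 1
  | _, _ => 0
  end.

Definition deriv_one_plus_r2 (i : nat) : fexpr :=
  FPlus (FMult (FConst 2) (FMult (FCoord 1) (FConst (dcoord 1 i))))
       (FMult (FConst 2) (FMult (FCoord 2) (FConst (dcoord 2 i)))).

Fixpoint deriv (i : nat) (e : fexpr) : fexpr :=
  match e with
  | FConst _ => FConst 0
  | FCoord k => FConst (dcoord k i)
  | FPlus a b => FPlus (deriv i a) (deriv i b)
  | FMult a b => FPlus (FMult (deriv i a) b) (FMult a (deriv i b))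
  | FConf => FMult (FConst (-1)) (FMult (FMult FConf FConf) (deriv_one_plus_r2 i))
  | FLnOnePlusR2 => FMult FConf (deriv_one_plus_r2 i)
  end.

Lemma shift0 i p : shift i 0 p = p.
Proof. destruct p as [[s x] y]; destruct i as [|[|i]]; simpl; rewrite Rplus_0_r; reflexivity. Qed.

Lemma is_derive_eval e i p :
  is_derive (fun h => eval e (shift i h p)) 0 (eval (deriv i e) p).
Proof.
  induction e as [c|k|a IHa b IHb|a IHa b IHb| |]; simpl.
  5-6: pose proof (one_plus_r2_pos p) as Hw; unfold conf, one_plus_r2 in *;
    destruct p as [[s x] y]; destruct i as [|[|i]]; simpl in *;
    auto_derive; try split; try lra; field; lra.
  - auto_derive; auto.
  - destruct p as [[s x] y];
      destruct k as [|[|k]], i as [|[|i]]; simpl; auto_derive; auto; ring.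
  - exact (is_derive_plus _ _ _ _ _ IHa IHb).
  - pose proof (is_derive_mult _ _ _ _ _ IHa IHb Rmult_comm) as H.
    cbv beta in H; rewrite !shift0 in H; exact H.
Qed.

Lemma continuous_eval e p : continuous (eval e) p.
Proof.
  induction e; simpl.
  - apply continuous_const.
  - apply continuous_coord.
  - now apply continuous_Rplus.
  - now apply continuous_Rmult.
  - apply (continuous_comp one_plus_r2 Rinv); [apply continuous_one_plus_r2|].
    apply continuous_Rinv, Rgt_not_eq, one_plus_r2_pos.
  - apply (continuous_comp one_plus_r2 ln); [apply continuous_one_plus_r2|].
    apply continuous_ln, one_plus_r2_pos.
Qed.

Lemma partial_eval i e : partial i (eval e) = eval (deriv i e).
Proof.
  apply functional_extensionality; intros p.
  apply is_derive_unique, is_derive_eval.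
Qed.

Lemma has_partial_eval i e : has_partial i (eval e).
Proof. intros p; eexists; apply is_derive_eval. Qed.

Lemma iter_partial_eval l e : iter_partial l (eval e) = eval (fold_right deriv e l).
Proof.
  induction l as [|i l IH]; [reflexivity|].
  simpl; rewrite <- partial_eval, <- IH; reflexivity.
Qed.

Lemma smooth_eval e : smooth (eval e).
Proof.
  intros l _; rewrite iter_partial_eval; split.
  - intros; apply has_partial_eval.
  - intros; apply continuous_eval.
Qed.

Definition fsum3 (f : nat -> fexpr) : fexpr := FPlus (FPlus (f 0%nat) (f 1%nat)) (f 2%nat).
Definition FMinus (a b : fexpr) : fexpr := FPlus a (FMult (FConst (-1)) b).

Definition metricE (i j : nat) : fexpr :=
  if Nat.eqb i j then (match i with 0%nat => FConst 1 | _ => FConf end) else FConst 0.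

Definition metric_invE (i j : nat) : fexpr :=
  if Nat.eqb i j then
    (match i with
     | 0%nat => FConst 1
     | _ => FPlus (FPlus (FConst 1) (FMult (FCoord 1) (FCoord 1))) (FMult (FCoord 2) (FCoord 2))
     end)
  else FConst 0.

Definition GammaE (k i j : nat) : fexpr :=
  FMult (FConst (/2)) (fsum3 (fun l => FMult (metric_invE k l)
     (FMinus (FPlus (deriv i (metricE j l)) (deriv j (metricE i l))) (deriv l (metricE i j))))).

Definition RicE (i j : nat) : fexpr :=
  FPlus (FMinus (fsum3 (fun k => deriv k (GammaE k i j)))
              (fsum3 (fun k => deriv j (GammaE k i k))))
       (FMinus (fsum3 (fun k => fsum3 (fun l => FMult (GammaE k k l) (GammaE l i j))))
              (fsum3 (fun k => fsum3 (fun l => FMult (GammaE k j l) (GammaE l i k))))).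

Definition HessE (e : fexpr) (i j : nat) : fexpr :=
  FMinus (deriv i (deriv j e)) (fsum3 (fun k => FMult (GammaE k i j) (deriv k e))).

Lemma metric_eval i j : (fun q => g q i j) = eval (metricE i j).
Proof.
  apply functional_extensionality; intros q.
  unfold g, metricE; destruct (Nat.eqb i j); [destruct i|]; reflexivity.
Qed.

Lemma metric_inv_eval p i j : ginv p i j = eval (metric_invE i j) p.
Proof.
  unfold ginv, metric_invE; destruct (Nat.eqb i j); [destruct i|]; try reflexivity.
  simpl; unfold conf; rewrite Rinv_inv; simpl; ring.
Qed.

Lemma Gamma_eval p k i j : Gamma p k i j = eval (GammaE k i j) p.
Proof.
  unfold Gamma, GammaE, sum3, fsum3, FMinus; cbn [eval].
  rewrite !metric_eval, !partial_eval, !metric_inv_eval; ring.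
Qed.

Lemma Ric_eval p i j : Ric p i j = eval (RicE i j) p.
Proof.
  assert (HG : forall k i j, (fun q => Gamma q k i j) = eval (GammaE k i j)).
  { intros; apply functional_extensionality; intros; apply Gamma_eval. }
  unfold Ric, RicE, sum3, fsum3, FMinus; cbn [eval].
  rewrite !HG, !partial_eval, !Gamma_eval; ring.
Qed.

Lemma Hess_eval e p i j : Hess (eval e) p i j = eval (HessE e i j) p.
Proof.
  unfold Hess, HessE, sum3, fsum3, FMinus; cbn [eval].
  rewrite !partial_eval, !Gamma_eval; ring.
Qed.

Definition potentialE (c1 c2 : R) : fexpr := FPlus (FPlus (FConst c1) (FMult (FConst c2) (FCoord 0))) FLnOnePlusR2.

Lemma Hess_potential c1 c2 p i j : (i < 3)%nat -> (j < 3)%nat ->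
  Hess (eval (potentialE c1 c2)) p i j = Ric p i j.
Proof.
  intros Hi Hj; rewrite Hess_eval, Ric_eval.
  pose proof (one_plus_r2_pos p) as Hw.
  destruct p as [[s x] y]; unfold one_plus_r2 in Hw; simpl in Hw.
  destruct i as [|[|[|i]]]; try lia; destruct j as [|[|[|j]]]; try lia;
    cbv [deriv deriv_one_plus_r2 potentialE HessE RicE GammaE fsum3 FMinus metricE metric_invE
         Nat.eqb dcoord]; cbn [eval];
    unfold conf, one_plus_r2; simpl; field; lra.
Qed.

(* [chr1 = - x / (1 + r^2)] and [chr2 = - y / (1 + r^2)] give all Christoffel symbols of the
   cigar: Gamma^1_11 = Gamma^2_12 = - Gamma^1_22 = chr1, Gamma^2_22 = Gamma^1_12 = - Gamma^2_11 = chr2,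
   and those with an index 0 vanish. *)
Definition chr1 : pt -> R := eval (FMult (FConst (-1)) (FMult (FCoord 1) FConf)).
Definition chr2 : pt -> R := eval (FMult (FConst (-1)) (FMult (FCoord 2) FConf)).

Ltac Hess_entry :=
  unfold Hess, sum3, chr1, chr2; rewrite !Gamma_eval;
  cbv [GammaE fsum3 FMinus metricE metric_invE deriv deriv_one_plus_r2 dcoord Nat.eqb]; cbn [eval];
  match goal with p : pt |- _ =>
    pose proof (one_plus_r2_pos p); destruct p as [[s x] y] end;
  unfold conf, one_plus_r2 in *; simpl in *; field; lra.

Section HessianEntries.
Variables (f : pt -> R) (p : pt).

Lemma Hess_00 : Hess f p 0 0 = partial 0 (partial 0 f) p.
Proof. Hess_entry. Qed.
Lemma Hess_10 : Hess f p 1 0 = partial 1 (partial 0 f) p.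
Proof. Hess_entry. Qed.
Lemma Hess_20 : Hess f p 2 0 = partial 2 (partial 0 f) p.
Proof. Hess_entry. Qed.
Lemma Hess_11 :
  Hess f p 1 1 = partial 1 (partial 1 f) p - (chr1 p * partial 1 f p - chr2 p * partial 2 f p).
Proof. Hess_entry. Qed.
Lemma Hess_21 :
  Hess f p 2 1 = partial 2 (partial 1 f) p - (chr2 p * partial 1 f p + chr1 p * partial 2 f p).
Proof. Hess_entry. Qed.
Lemma Hess_12 :
  Hess f p 1 2 = partial 1 (partial 2 f) p - (chr2 p * partial 1 f p + chr1 p * partial 2 f p).
Proof. Hess_entry. Qed.
Lemma Hess_22 :
  Hess f p 2 2 = partial 2 (partial 2 f) p - (chr2 p * partial 2 f p - chr1 p * partial 1 f p).
Proof. Hess_entry. Qed.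

End HessianEntries.

(* This is [- K / (1 + r^2)], where [K = 2 / (1 + r^2)] is the Gauss curvature of the cigar. *)
Lemma partial_chr_sum p : partial 1 chr1 p + partial 2 chr2 p = - 2 / one_plus_r2 p ^ 2.
Proof.
  unfold chr1, chr2; rewrite !partial_eval.
  cbv [deriv deriv_one_plus_r2 dcoord]; cbn [eval].
  pose proof (one_plus_r2_pos p) as Hw; destruct p as [[s x] y].
  unfold conf, one_plus_r2 in *; simpl in *; field; lra.
Qed.

Section PartialCalculus.
Variables (i : nat) (f h : pt -> R).
Hypotheses (Hf : has_partial i f) (Hh : has_partial i h).

Lemma has_partial_plus : has_partial i (fun q => f q + h q).
Proof. intros q; exact (ex_derive_plus _ _ _ (Hf q) (Hh q)). Qed.

Lemma has_partial_minus : has_partial i (fun q => f q - h q).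
Proof. intros q; exact (ex_derive_minus _ _ _ (Hf q) (Hh q)). Qed.

Lemma has_partial_mult : has_partial i (fun q => f q * h q).
Proof. intros q; exact (ex_derive_mult _ _ _ (Hf q) (Hh q)). Qed.

Lemma partial_plus q : partial i (fun q => f q + h q) q = partial i f q + partial i h q.
Proof. exact (Derive_plus _ _ _ (Hf q) (Hh q)). Qed.

Lemma partial_minus q : partial i (fun q => f q - h q) q = partial i f q - partial i h q.
Proof. exact (Derive_minus _ _ _ (Hf q) (Hh q)). Qed.

Lemma partial_mult q :
  partial i (fun q => f q * h q) q = partial i f q * h q + f q * partial i h q.
Proof. unfold partial; rewrite (Derive_mult _ _ _ (Hf q) (Hh q)), shift0; reflexivity. Qed.

End PartialCalculus.

Ltac in_coords := let k := fresh in let Hk := fresh in intros k Hk; simpl in Hk; intuition lia.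

Lemma smooth_has_partial f l i : smooth f -> (forall k, In k l -> (k < 3)%nat) -> (i < 3)%nat ->
  has_partial i (iter_partial l f).
Proof. intros Hf Hl; exact (proj1 (Hf l Hl) i). Qed.

Lemma smooth_continuous f l p : smooth f -> (forall k, In k l -> (k < 3)%nat) ->
  continuous (iter_partial l f) p.
Proof. intros Hf Hl; exact (proj2 (Hf l Hl) p). Qed.

Lemma iter_partial_minus f h l : smooth f -> smooth h -> (forall i, In i l -> (i < 3)%nat) ->
  iter_partial l (fun q => f q - h q) = fun q => iter_partial l f q - iter_partial l h q.
Proof.
  intros Hf Hh; induction l as [|i l IH]; intros Hl; [reflexivity|].
  assert (Hl' : forall k, In k l -> (k < 3)%nat) by (intros; apply Hl; right; auto).
  assert (Hi : (i < 3)%nat) by (apply Hl; left; auto).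
  simpl; rewrite (IH Hl'); apply functional_extensionality; intros q.
  apply partial_minus; apply smooth_has_partial; assumption.
Qed.

Lemma smooth_minus f h : smooth f -> smooth h -> smooth (fun q => f q - h q).
Proof.
  intros Hf Hh l Hl; rewrite (iter_partial_minus f h l Hf Hh Hl); split.
  - intros i Hi; apply has_partial_minus; apply smooth_has_partial; assumption.
  - intros p; apply (continuous_minus (iter_partial l f) (iter_partial l h));
      apply smooth_continuous; assumption.
Qed.

Lemma Hess_minus f h p i j : smooth f -> smooth h -> (i < 3)%nat -> (j < 3)%nat ->
  Hess (fun q => f q - h q) p i j = Hess f p i j - Hess h p i j.
Proof.
  intros Hf Hh Hi Hj.
  assert (H1 : forall k, (k < 3)%nat -> partial k (fun q => f q - h q) p = partial k f p - partial k h p).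
  { intros k Hk; exact (f_equal (fun u => u p) (iter_partial_minus f h (k :: nil) Hf Hh
      ltac:(in_coords))). }
  assert (H2 : partial i (partial j (fun q => f q - h q)) p =
               partial i (partial j f) p - partial i (partial j h) p).
  { exact (f_equal (fun u => u p) (iter_partial_minus f h (i :: j :: nil) Hf Hh
      ltac:(in_coords))). }
  unfold Hess, sum3; rewrite H2, !H1 by lia; ring.
Qed.

Lemma is_derive_translate (k : R -> R) a l :
  is_derive (fun h => k (a + h)) 0 l -> is_derive k a l.
Proof.
  intros Hl.
  assert (Hl' : is_derive (fun h => k (a + h)) (a - a) l) by (rewrite Rminus_diag; exact Hl).
  assert (Hs : is_derive (fun z : R => z - a) a 1) by (auto_derive; auto; ring).
  pose proof (is_derive_comp (fun h => k (a + h)) (fun z => z - a) a l 1 Hl' Hs) as H.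
  rewrite <- (scal_one l); eapply is_derive_ext; [|exact H].
  intros t; simpl; f_equal; ring.
Qed.

Lemma ex_derive_translate (k : R -> R) a :
  ex_derive (fun h => k (a + h)) 0 -> ex_derive k a.
Proof. intros [l Hl]; exists l; exact (is_derive_translate k a l Hl). Qed.

Lemma Derive_translate (k : R -> R) a : Derive (fun h => k (a + h)) 0 = Derive k a.
Proof.
  unfold Derive; f_equal; apply Lim_ext; intros h.
  rewrite Rplus_0_l, Rplus_0_r; reflexivity.
Qed.

Lemma continuity_2d_pt_slice (h : pt -> R) s x y :
  continuous h (s, x, y) -> continuity_2d_pt (fun u v => h (s, u, v)) x y.
Proof.
  intros H eps.
  destruct (proj1 (filterlim_locally h (h (s, x, y))) H eps) as [delta Hd].
  exists delta; intros u v Hu Hv; apply Hd.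
  split; [split|]; [apply ball_center | exact Hu | exact Hv].
Qed.

Lemma partial_comm12 f p :
  has_partial 1 f -> has_partial 2 f ->
  has_partial 1 (partial 2 f) -> has_partial 2 (partial 1 f) ->
  continuous (partial 1 (partial 2 f)) p -> continuous (partial 2 (partial 1 f)) p ->
  partial 1 (partial 2 f) p = partial 2 (partial 1 f) p.
Proof.
  destruct p as [[s x] y]; intros H1 H2 H12 H21 C12 C21.
  set (f2 := fun u v => f (s, u, v)).
  assert (E1 : forall u v, partial 1 f (s, u, v) = Derive (fun t => f2 t v) u)
    by (intros; apply (Derive_translate (fun t => f (s, t, v)))).
  assert (E2 : forall u v, partial 2 f (s, u, v) = Derive (fun t => f2 u t) v)
    by (intros; apply (Derive_translate (fun t => f (s, u, t)))).
  assert (E12 : forall u v, partial 1 (partial 2 f) (s, u, v) =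
                            Derive (fun z => Derive (fun t => f2 z t) v) u).
  { intros u v; unfold partial at 1; simpl.
    rewrite (Derive_translate (fun z => partial 2 f (s, z, v))).
    apply Derive_ext; intros; apply E2. }
  assert (E21 : forall u v, partial 2 (partial 1 f) (s, u, v) =
                            Derive (fun z => Derive (fun t => f2 t z) u) v).
  { intros u v; unfold partial at 1; simpl.
    rewrite (Derive_translate (fun z => partial 1 f (s, u, z))).
    apply Derive_ext; intros; apply E1. }
  rewrite E12, E21; apply Schwarz.
  - exists (mkposreal 1 Rlt_0_1); intros u v _ _; repeat split.
    + exact (ex_derive_translate (fun z => f (s, z, v)) u (H1 (s, u, v))).
    + exact (ex_derive_translate (fun z => f (s, u, z)) v (H2 (s, u, v))).
    + apply (ex_derive_ext (fun z => partial 2 f (s, z, v))); [intros; apply E2|].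
      exact (ex_derive_translate (fun z => partial 2 f (s, z, v)) u (H12 (s, u, v))).
    + apply (ex_derive_ext (fun z => partial 1 f (s, u, z))); [intros; apply E1|].
      exact (ex_derive_translate (fun z => partial 1 f (s, u, z)) v (H21 (s, u, v))).
  - apply (continuity_2d_pt_ext (fun u v => partial 1 (partial 2 f) (s, u, v)));
      [apply E12 | now apply continuity_2d_pt_slice].
  - apply (continuity_2d_pt_ext (fun u v => partial 2 (partial 1 f) (s, u, v)));
      [apply E21 | now apply continuity_2d_pt_slice].
Qed.

Lemma shift_shift i a h p : shift i h (shift i a p) = shift i (a + h) p.
Proof. destruct p as [[s x] y]; destruct i as [|[|i]]; simpl; rewrite Rplus_assoc; reflexivity. Qed.

Lemma shift_invariant_of_partial_zero f i :
  has_partial i f -> (forall q, partial i f q = 0) -> forall p h, f (shift i h p) = f p.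
Proof.
  intros Hf H0 p h.
  assert (D : forall t, is_derive (fun h => f (shift i h p)) t 0).
  { intros t; apply is_derive_translate.
    pose proof (Derive_correct _ _ (Hf (shift i t p))) as Ht.
    change (Derive _ 0) with (partial i f (shift i t p)) in Ht; rewrite H0 in Ht.
    eapply is_derive_ext; [|exact Ht].
    intros u; simpl; rewrite shift_shift; reflexivity. }
  rewrite <- (shift0 i p) at 2.
  destruct (Rtotal_order h 0) as [Hlt|[->|Hgt]].
  - refine (eq_is_derive (fun h => f (shift i h p)) h 0 _ Hlt); intros; apply D.
  - reflexivity.
  - symmetry; refine (eq_is_derive (fun h => f (shift i h p)) 0 h _ Hgt); intros; apply D.
Qed.

Lemma constant_of_partials_zero f :
  (forall i, (i < 3)%nat -> has_partial i f) ->
  (forall i q, (i < 3)%nat -> partial i f q = 0) -> forall p q, f p = f q.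
Proof.
  intros Hf H0.
  assert (Hinv : forall i p h, (i < 3)%nat -> f (shift i h p) = f p)
    by (intros i p h Hi; apply shift_invariant_of_partial_zero; auto).
  assert (Horigin : forall p, f p = f origin).
  { intros [[s x] y]; unfold origin.
    pose proof (Hinv 0%nat (s, x, y) (- s) ltac:(lia)) as H0'.
    pose proof (Hinv 1%nat (0, x, y) (- x) ltac:(lia)) as H1'.
    pose proof (Hinv 2%nat (0, 0, y) (- y) ltac:(lia)) as H2'.
    simpl in *; rewrite !Rplus_opp_r in *; congruence. }
  intros p q; rewrite (Horigin p), (Horigin q); reflexivity.
Qed.

(* [P dx + Q dy] is parallel for a connection on the (x, y)-plane whose Christoffel symbols
   are built from [X], [Y] as those of the cigar are from [chr1], [chr2].  The symmetry of
   mixed partials then forces [(P, Q)] into the kernel of a rotation-like matrix whose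
   determinant is positive as soon as the curvature term [partial 1 X + partial 2 Y] is not 0. *)
Section ParallelForm.
Variables P Q X Y : pt -> R.
Hypotheses (HP : forall i, (i < 3)%nat -> has_partial i P)
           (HQ : forall i, (i < 3)%nat -> has_partial i Q)
           (HX : forall i, has_partial i X) (HY : forall i, has_partial i Y).
Hypotheses (dP1 : partial 1 P = fun q => X q * P q - Y q * Q q)
           (dP2 : partial 2 P = fun q => Y q * P q + X q * Q q)
           (dQ1 : partial 1 Q = fun q => Y q * P q + X q * Q q)
           (dQ2 : partial 2 Q = fun q => Y q * Q q - X q * P q).
Hypotheses (CP12 : forall p, continuous (partial 1 (partial 2 P)) p)
           (CP21 : forall p, continuous (partial 2 (partial 1 P)) p)
           (CQ12 : forall p, continuous (partial 1 (partial 2 Q)) p)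
           (CQ21 : forall p, continuous (partial 2 (partial 1 Q)) p).
Hypothesis curvature_nonzero : forall p, partial 1 X p + partial 2 Y p <> 0.

Ltac has_partial_tac :=
  repeat match goal with
  | |- has_partial _ (fun q => @?a q - @?b q) => apply has_partial_minus
  | |- has_partial _ (fun q => @?a q + @?b q) => apply has_partial_plus
  | |- has_partial _ (fun q => @?a q * @?b q) => apply has_partial_mult
  | |- has_partial _ X => apply HX
  | |- has_partial _ Y => apply HY
  | |- has_partial _ P => apply HP; lia
  | |- has_partial _ Q => apply HQ; lia
  end.

Lemma mixed_partials_P q :
  partial 2 (partial 1 P) q - partial 1 (partial 2 P) q =
  (partial 2 X q - partial 1 Y q) * P q - (partial 1 X q + partial 2 Y q) * Q q.
Proof.
  rewrite dP1, dP2, partial_minus, partial_plus, !partial_mult by has_partial_tac.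
  rewrite dP1, dQ1, dP2, dQ2; ring.
Qed.

Lemma mixed_partials_Q q :
  partial 2 (partial 1 Q) q - partial 1 (partial 2 Q) q =
  (partial 1 X q + partial 2 Y q) * P q + (partial 2 X q - partial 1 Y q) * Q q.
Proof.
  rewrite dQ1, dQ2, partial_plus, partial_minus, !partial_mult by has_partial_tac.
  rewrite dP1, dQ1, dP2, dQ2; ring.
Qed.

Lemma parallel_form_zero p : P p = 0 /\ Q p = 0.
Proof.
  assert (SP : partial 1 (partial 2 P) p = partial 2 (partial 1 P) p).
  { apply partial_comm12; auto; [rewrite dP2 | rewrite dP1]; has_partial_tac. }
  assert (SQ : partial 1 (partial 2 Q) p = partial 2 (partial 1 Q) p).
  { apply partial_comm12; auto; [rewrite dQ2 | rewrite dQ1]; has_partial_tac. }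
  pose proof (mixed_partials_P p) as MP; pose proof (mixed_partials_Q p) as MQ.
  pose proof (curvature_nonzero p) as HK.
  set (K := partial 1 X p + partial 2 Y p) in *.
  set (c := partial 2 X p - partial 1 Y p) in *.
  assert (HK2 : 0 < c ^ 2 + K ^ 2) by (assert (0 < K ^ 2) by (apply pow2_gt_0; exact HK); nra).
  assert (E1 : c * P p - K * Q p = 0) by lra.
  assert (E2 : K * P p + c * Q p = 0) by lra.
  split; apply (Rmult_eq_reg_l (c ^ 2 + K ^ 2)); try lra.
  - replace ((c ^ 2 + K ^ 2) * P p) with (c * (c * P p - K * Q p) + K * (K * P p + c * Q p))
      by ring; rewrite E1, E2; ring.
  - replace ((c ^ 2 + K ^ 2) * Q p) with (c * (K * P p + c * Q p) - K * (c * P p - K * Q p))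
      by ring; rewrite E1, E2; ring.
Qed.

End ParallelForm.

Section HessianFree.
Variable E : pt -> R.
Hypothesis HE : smooth E.
Hypothesis Hess_E : forall p i j, (i < 3)%nat -> (j < 3)%nat -> Hess E p i j = 0.

Lemma cigar_gradient_zero p : partial 1 E p = 0 /\ partial 2 E p = 0.
Proof.
  apply (parallel_form_zero _ _ chr1 chr2).
  1-2: intros i Hi; apply (smooth_has_partial E (_ :: nil)); [exact HE | in_coords | exact Hi].
  1-2: intros; apply has_partial_eval.
  5-8: intros q; apply (smooth_continuous E (_ :: _ :: _ :: nil)); [exact HE | in_coords].
  - apply functional_extensionality; intros q.
    pose proof (Hess_11 E q); pose proof (Hess_E q 1 1 ltac:(lia) ltac:(lia)); lra.
  - apply functional_extensionality; intros q.
    pose proof (Hess_21 E q); pose proof (Hess_E q 2 1 ltac:(lia) ltac:(lia)); lra.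
  - apply functional_extensionality; intros q.
    pose proof (Hess_12 E q); pose proof (Hess_E q 1 2 ltac:(lia) ltac:(lia)); lra.
  - apply functional_extensionality; intros q.
    pose proof (Hess_22 E q); pose proof (Hess_E q 2 2 ltac:(lia) ltac:(lia)); lra.
  - intros q; rewrite partial_chr_sum; pose proof (one_plus_r2_pos q).
    unfold Rdiv; apply Rmult_integral_contrapositive.
    split; [lra | apply Rinv_neq_0_compat, pow_nonzero; lra].
Qed.

Lemma partial_s_constant p : partial 0 E p = partial 0 E origin.
Proof.
  apply constant_of_partials_zero.
  - intros i Hi; apply (smooth_has_partial E (0%nat :: nil)); [exact HE | in_coords | exact Hi].
  - intros i q Hi; destruct i as [|[|[|i]]]; try lia;
      [rewrite <- Hess_00 | rewrite <- Hess_10 | rewrite <- Hess_20]; apply Hess_E; lia.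
Qed.

Lemma Hess_free_affine : exists c1 c2, forall p, E p = c1 + c2 * coord 0 p.
Proof.
  set (c2 := partial 0 E origin).
  set (lin := FMult (FConst c2) (FCoord 0)).
  assert (HE0 : forall i, (i < 3)%nat -> has_partial i E)
    by (intros i Hi; apply (smooth_has_partial E nil); [exact HE | in_coords | exact Hi]).
  assert (Hc : forall p, E p - eval lin p = E origin - eval lin origin).
  { intros p; apply (constant_of_partials_zero (fun q => E q - eval lin q)).
    - intros i Hi; apply has_partial_minus; [apply HE0, Hi | apply has_partial_eval].
    - intros i q Hi; rewrite partial_minus, partial_eval by auto using has_partial_eval.
      unfold lin; cbn [deriv eval]; destruct i as [|[|[|i]]]; try lia; cbv [dcoord];
        [rewrite partial_s_constant | rewrite (proj1 (cigar_gradient_zero q))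
        | rewrite (proj2 (cigar_gradient_zero q))]; unfold c2; ring. }
  exists (E origin - eval lin origin), c2; intros p.
  rewrite <- (Hc p); unfold lin; cbn [eval]; ring.
Qed.

End HessianFree.

Lemma ex_RInt_01 (f : R -> R) :
  (forall t, 0 <= t <= 1 -> continuous f t) -> ex_RInt f 0 1.
Proof.
  intros Hf; apply (@ex_RInt_continuous R_CompleteNormedModule).
  intros t Ht; rewrite Rmin_left, Rmax_right in Ht by lra; auto.
Qed.

Lemma abs_sub_le_RInt (f J : R -> R) :
  (forall t, ex_derive f t) -> (forall t, 0 <= t <= 1 -> continuous (Derive f) t) ->
  ex_RInt J 0 1 -> (forall t, 0 <= t <= 1 -> Rabs (Derive f t) <= J t) ->
  Rabs (f 1 - f 0) <= RInt J 0 1.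
Proof.
  intros Hf Hf' HJ Hle.
  rewrite <- RInt_Derive by (intros; auto; apply Hf'; rewrite Rmin_left, Rmax_right in *; lra).
  eapply Rle_trans; [apply abs_RInt_le; [lra | now apply ex_RInt_01] |].
  apply RInt_le; [lra | | exact HJ | intros; apply Hle; lra].
  apply ex_RInt_01; intros; apply continuous_Rabs_comp; auto.
Qed.

Lemma sq_dot_le (a b u v : R) : (a * u + b * v) ^ 2 <= (1 + a ^ 2 + b ^ 2) * (u ^ 2 + v ^ 2).
Proof.
  assert (E : (1 + a ^ 2 + b ^ 2) * (u ^ 2 + v ^ 2) - (a * u + b * v) ^ 2
              = (a * v - b * u) ^ 2 + (u ^ 2 + v ^ 2)) by ring.
  pose proof (pow2_ge_0 (a * v - b * u)); pose proof (pow2_ge_0 u); pose proof (pow2_ge_0 v).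
  lra.
Qed.

Section Curve.
Variable gam : R -> pt.
Hypothesis Hgam : C1_curve gam.

Let c (i : nat) (t : R) : R := coord i (gam t).
Let v (i : nat) (t : R) : R := Derive (c i) t.

Definition speed (t : R) : R := sqrt (v 0 t ^ 2 + conf (gam t) * (v 1 t ^ 2 + v 2 t ^ 2)).

Lemma curve_length_speed : curve_length gam = RInt speed 0 1.
Proof.
  apply RInt_ext; intros t _; unfold speed; f_equal.
  unfold sum3, g, v, c; simpl; ring.
Qed.

Lemma ex_derive_coord_curve i t : (i < 3)%nat -> ex_derive (c i) t.
Proof. intros Hi; exact (proj1 (Hgam i Hi) t). Qed.

Lemma continuous_velocity i t : (i < 3)%nat -> 0 <= t <= 1 -> continuous (v i) t.
Proof. intros Hi Ht; exact (proj2 (Hgam i Hi) t Ht). Qed.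

Lemma continuous_coord_curve i t : (i < 3)%nat -> continuous (c i) t.
Proof. intros Hi; apply (@ex_derive_continuous R_AbsRing R_NormedModule), ex_derive_coord_curve, Hi. Qed.

Lemma continuous_conf_curve t : continuous (fun t => conf (gam t)) t.
Proof.
  apply (continuous_Rinv_comp (fun t => one_plus_r2 (gam t))).
  - unfold one_plus_r2; continuous_arith; apply continuous_coord_curve; lia.
  - apply Rgt_not_eq, one_plus_r2_pos.
Qed.

Ltac continuous_curve Ht :=
  continuous_arith;
  repeat match goal with
  | |- continuous (fun t => conf (gam t)) _ => apply continuous_conf_curve
  | |- continuous (fun t => coord _ (gam t)) _ => apply continuous_coord_curve; lia
  | |- continuous (fun t => c _ t) _ => apply continuous_coord_curve; lia
  | |- continuous (fun t => v _ t) _ => apply continuous_velocity; [lia | exact Ht]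
  end.

Lemma ex_RInt_speed : ex_RInt speed 0 1.
Proof.
  apply ex_RInt_01; intros t Ht; apply continuous_sqrt_comp.
  continuous_curve Ht.
Qed.

Lemma abs_sub_le_length (f : R -> R) :
  (forall t, ex_derive f t) -> (forall t, 0 <= t <= 1 -> continuous (Derive f) t) ->
  (forall t, 0 <= t <= 1 -> Rabs (Derive f t) <= speed t) ->
  Rabs (f 1 - f 0) <= curve_length gam.
Proof.
  intros; rewrite curve_length_speed; apply abs_sub_le_RInt; auto; apply ex_RInt_speed.
Qed.

Lemma coord0_variation_le_length : Rabs (coord 0 (gam 1) - coord 0 (gam 0)) <= curve_length gam.
Proof.
  apply (abs_sub_le_length (c 0)).
  - intros; apply ex_derive_coord_curve; lia.
  - intros; apply continuous_velocity; auto; lia.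
  - intros t _; unfold speed; rewrite <- sqrt_Rsqr_abs; apply sqrt_le_1_alt.
    pose proof (Rlt_le _ _ (Rinv_0_lt_compat _ (one_plus_r2_pos (gam t)))).
    pose proof (pow2_ge_0 (v 1 t)); pose proof (pow2_ge_0 (v 2 t)).
    unfold Rsqr, conf; fold (one_plus_r2 (gam t)); fold (v 0 t); nra.
Qed.

Lemma is_derive_half_ln_one_plus_r2 t :
  is_derive (fun t => ln (one_plus_r2 (gam t)) / 2) t
            ((c 1 t * v 1 t + c 2 t * v 2 t) / one_plus_r2 (gam t)).
Proof.
  pose proof (ex_derive_coord_curve 1 t ltac:(lia)) as H1.
  pose proof (ex_derive_coord_curve 2 t ltac:(lia)) as H2.
  pose proof (one_plus_r2_pos (gam t)) as Hw.
  change (is_derive (fun t => ln (1 + c 1 t ^ 2 + c 2 t ^ 2) / 2) t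
    ((c 1 t * Derive (c 1) t + c 2 t * Derive (c 2) t) / (1 + c 1 t ^ 2 + c 2 t ^ 2))).
  change (0 < 1 + c 1 t ^ 2 + c 2 t ^ 2) in Hw.
  auto_derive; [repeat split; auto; lra | unfold c in *; simpl in *; field; lra].
Qed.

Lemma half_dln_one_plus_r2_le_speed t :
  Rabs ((c 1 t * v 1 t + c 2 t * v 2 t) / one_plus_r2 (gam t)) <= speed t.
Proof.
  unfold speed; rewrite <- sqrt_Rsqr_abs; apply sqrt_le_1_alt.
  pose proof (one_plus_r2_pos (gam t)) as Hw.
  pose proof (sq_dot_le (c 1 t) (c 2 t) (v 1 t) (v 2 t)) as CS.
  pose proof (pow2_ge_0 (v 0 t)).
  change (1 + c 1 t ^ 2 + c 2 t ^ 2) with (one_plus_r2 (gam t)) in CS.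
  unfold conf; fold (one_plus_r2 (gam t)); set (w := one_plus_r2 (gam t)) in *.
  set (N := c 1 t * v 1 t + c 2 t * v 2 t) in *; set (S := v 1 t ^ 2 + v 2 t ^ 2) in *.
  unfold Rsqr; replace (N / w * (N / w)) with (N ^ 2 * / w ^ 2) by (field; lra).
  replace (/ w * S) with (w * S * / w ^ 2) by (field; lra).
  assert (Hw2 : 0 <= / w ^ 2) by (apply Rlt_le, Rinv_0_lt_compat, pow_lt; lra).
  pose proof (Rmult_le_compat_r _ _ _ Hw2 CS); lra.
Qed.

Lemma ln_one_plus_r2_variation_le_length :
  Rabs (ln (one_plus_r2 (gam 1)) - ln (one_plus_r2 (gam 0))) <= 2 * curve_length gam.
Proof.
  set (f := fun t => ln (one_plus_r2 (gam t)) / 2).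
  assert (Df : forall t, Derive f t = (c 1 t * v 1 t + c 2 t * v 2 t) / one_plus_r2 (gam t))
    by (intros; apply is_derive_unique, is_derive_half_ln_one_plus_r2).
  assert (Hf : Rabs (f 1 - f 0) <= curve_length gam).
  { apply abs_sub_le_length.
    - intros t; eexists; apply is_derive_half_ln_one_plus_r2.
    - intros t Ht; apply (continuous_ext (fun t => (c 1 t * v 1 t + c 2 t * v 2 t) * conf (gam t)));
        [intros; rewrite Df; reflexivity |].
      continuous_curve Ht.
    - intros t _; rewrite Df; apply half_dln_one_plus_r2_le_speed. }
  unfold f in Hf.
  replace (ln (one_plus_r2 (gam 1)) - ln (one_plus_r2 (gam 0)))
    with (2 * (ln (one_plus_r2 (gam 1)) / 2 - ln (one_plus_r2 (gam 0)) / 2)) by field.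
  rewrite Rabs_mult, Rabs_pos_eq by lra; lra.
Qed.

End Curve.

Lemma Glb_Rbar_ge (E : R -> Prop) (B x : R) :
  E x -> (forall L, E L -> B <= L) -> B <= real (Glb_Rbar E).
Proof.
  intros Hx HB; destruct (Glb_Rbar_correct E) as [Hlow Hgreatest].
  assert (H1 : Rbar_le B (Glb_Rbar E)) by (apply Hgreatest; intros L HL; apply HB, HL).
  assert (H2 : Rbar_le (Glb_Rbar E) x) by (apply Hlow, Hx).
  destruct (Glb_Rbar E); simpl in *; tauto.
Qed.

Lemma segment_C1 (q : pt) :
  C1_curve (fun t => (t * coord 0 q, t * coord 1 q, t * coord 2 q)).
Proof.
  intros i Hi.
  assert (Dlin : forall a, Derive (fun u => u * a) = fun _ => a).
  { intros a; apply functional_extensionality; intros u.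
    apply is_derive_unique; auto_derive; auto; ring. }
  destruct i as [|[|[|i]]]; try lia; simpl; rewrite Dlin;
    split; intros; first [apply continuous_const | auto_derive; auto].
Qed.

Lemma dist_origin_lower_bound q :
  Rabs (coord 0 q) <= dist origin q /\ ln (one_plus_r2 q) <= 2 * dist origin q.
Proof.
  set (seg := fun t => (t * coord 0 q, t * coord 1 q, t * coord 2 q)).
  assert (Hseg : seg 0 = origin /\ seg 1 = q).
  { unfold seg, origin; rewrite !Rmult_0_l, !Rmult_1_l.
    destruct q as [[s x] y]; split; reflexivity. }
  assert (Hw0 : ln (one_plus_r2 origin) = 0).
  { replace (one_plus_r2 origin) with 1 by (unfold one_plus_r2, origin; simpl; ring).
    apply ln_1. }
  assert (Hcurve : exists gam, C1_curve gam /\ gam 0 = origin /\ gam 1 = q /\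
                              curve_length seg = curve_length gam)
    by (exists seg; split; [apply segment_C1 | tauto]).
  unfold dist; split.
  - apply (Glb_Rbar_ge _ _ (curve_length seg) Hcurve).
    intros L [gam [Hg [H0 [H1 ->]]]].
    pose proof (coord0_variation_le_length gam Hg) as H; rewrite H0, H1 in H.
    unfold origin in H; simpl coord in H at 2; rewrite Rminus_0_r in H; exact H.
  - apply (Rmult_le_reg_l (/ 2)); [lra |]; rewrite <- Rmult_assoc, Rinv_l, Rmult_1_l by lra.
    apply (Glb_Rbar_ge _ _ (curve_length seg) Hcurve).
    intros L [gam [Hg [H0 [H1 ->]]]].
    pose proof (ln_one_plus_r2_variation_le_length gam Hg) as H; rewrite H0, H1, Hw0 in H.
    apply Rabs_le_between in H; lra.
Qed.

Lemma two_ln_cosh_rho p : 2 * ln (cosh (rho p)) = ln (one_plus_r2 p).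
Proof.
  unfold rho, arcsinh, cosh.
  set (r := sqrt (coord 1 p ^ 2 + coord 2 p ^ 2)).
  assert (Hr : 0 <= r) by apply sqrt_pos.
  assert (Hr2 : r ^ 2 = coord 1 p ^ 2 + coord 2 p ^ 2) by (apply pow2_sqrt; nra).
  set (S := sqrt (r ^ 2 + 1)).
  assert (HS : 0 < S) by (apply sqrt_lt_R0; nra).
  assert (HS2 : S ^ 2 = r ^ 2 + 1) by (apply pow2_sqrt; nra).
  rewrite exp_Ropp, exp_ln by lra.
  replace ((r + S + / (r + S)) / 2) with S by (field_simplify_eq; nra).
  replace (one_plus_r2 p) with (S * S) by (unfold one_plus_r2; nra).
  rewrite ln_mult by lra; ring.
Qed.

Lemma eval_potential c1 c2 p :
  eval (potentialE c1 c2) p = c1 + c2 * coord 0 p + 2 * ln (cosh (rho p)).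
Proof. rewrite two_ln_cosh_rho; reflexivity. Qed.

Lemma potential_linear_growth c1 c2 : linear_growth (eval (potentialE c1 c2)).
Proof.
  exists origin, (Rabs c1 + Rabs c2 + 2); intros q.
  destruct (dist_origin_lower_bound q) as [Hs Hw].
  assert (Hw1 : 0 <= ln (one_plus_r2 q))
    by (rewrite <- ln_1; apply ln_le; [lra | unfold one_plus_r2; nra]).
  cbn [eval potentialE]; set (d := dist origin q) in *.
  assert (Htri : Rabs (c1 + c2 * coord 0 q + ln (one_plus_r2 q))
                 <= Rabs c1 + Rabs c2 * Rabs (coord 0 q) + ln (one_plus_r2 q)).
  { rewrite <- (Rabs_pos_eq (ln (one_plus_r2 q))) at 2 by exact Hw1; rewrite <- Rabs_mult.
    eapply Rle_trans; [apply Rabs_triang | apply Rplus_le_compat_r, Rabs_triang]. }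
  pose proof (Rmult_le_compat_l _ _ _ (Rabs_pos c2) Hs).
  pose proof (Rabs_pos c1); pose proof (Rabs_pos c2); nra.
Qed.

Theorem theorem3p4 : forall F : pt -> R,
  (smooth F /\
   (forall p i j, (i < 3)%nat -> (j < 3)%nat -> Hess F p i j = Ric p i j) /\
   linear_growth F)
  <->
  (exists c1 c2 : R, forall p : pt,
     F p = c1 + c2 * coord 0 p + 2 * ln (cosh (rho p))).
Proof.
  intros F; split.
  - intros [HF [HRic _]].
    destruct (Hess_free_affine (fun q => F q - eval (potentialE 0 0) q)) as [c1 [c2 Haff]].
    + apply smooth_minus; [exact HF | apply smooth_eval].
    + intros p i j Hi Hj.
      rewrite Hess_minus, HRic, Hess_potential by auto using smooth_eval; ring.
    + exists c1, c2; intros p.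
      specialize (Haff p); rewrite eval_potential in Haff; lra.
  - intros [c1 [c2 HF]].
    replace F with (eval (potentialE c1 c2))
      by (apply functional_extensionality; intros p; rewrite HF; apply eval_potential).
    split; [apply smooth_eval | split].
    + intros; apply Hess_potential; assumption.
    + apply potential_linear_growth.
Qed.
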